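(* For every $n\ge0$, $$|\mathcal{B}_{n+1}(213)|=\sum_{j=0}^{n}|\mathcal{G}(n;0,j)|.$$
   Context: A ballot permutation is a $\pi\in\mathfrak{S}_m$ such that every prefix $\pi_1\cdots\pi_i$ has at most as many descents ($\pi_j>\pi_{j+1}$) as ascents ($\pi_j<\pi_{j+1}$); $\mathcal{B}_m$ denotes the set of them, and $\mathcal{B}_m(213)$ the subset of those having no subsequence order-isomorphic to $213$. A Gessel walk is a lattice path confined to $\mathbb{N}^2$ with steps from $\{(0,1),(0,-1),(1,1),(-1,-1)\}$. $\mathcal{G}(n;i,j)$ is the set of $n$-step Gessel walks starting at $(0,i)$ and ending at $(0,j)$. *)

From mathcomp Require Import all_boot all_order all_algebra all_fingroup.
Set Implicit Arguments. Unset Strict Implicit. Unset Printing Implicit Defensive.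
Import GRing.Theory Num.Theory.

(* One-line notation (0-based): k-th value of pi, as a nat in 0..m-1. *)
Definition pval (m : nat) (pi : 'S_m) (k : nat) : nat :=
  match m as m0 return 'S_m0 -> nat with
  | 0 => fun _ => 0
  | m'.+1 => fun p => nat_of_ord (p (inord k : 'I_m'.+1))
  end pi.

(* number of descents / ascents inside the prefix pi_1 ... pi_i
   (1-based positions j with j < i, i.e. 0-based j < i-1) *)
Definition pref_des (m : nat) (pi : 'S_m) (i : nat) : nat :=
  \sum_(j < i.-1) (pval pi j.+1 < pval pi j).
Definition pref_asc (m : nat) (pi : 'S_m) (i : nat) : nat :=
  \sum_(j < i.-1) (pval pi j < pval pi j.+1).

Definition ballot (m : nat) (pi : 'S_m) : bool :=
  [forall i : 'I_m.+1, pref_des pi i <= pref_asc pi i].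

Definition contains213 (m : nat) (pi : 'S_m) : bool :=
  [exists a : 'I_m, exists b : 'I_m, exists c : 'I_m,
     [&& a < b, b < c, pi b < pi a & pi a < pi c]].

Definition ballot213 (m : nat) : {set 'S_m} :=
  [set pi : 'S_m | ballot pi && ~~ contains213 pi].

Local Open Scope ring_scope.
(* Steps encoded by 'I_4 :
   0 -> (0,1), 1 -> (0,-1), 2 -> (1,1), 3 -> (-1,-1). *)
Definition stepx (s : 'I_4) : int :=
  match nat_of_ord s with 2 => 1 | 3 => -1 | _ => 0 end.
Definition stepy (s : 'I_4) : int :=
  match nat_of_ord s with 0 => 1 | 1 => -1 | 2 => 1 | _ => -1 end.

Definition posx (w : seq 'I_4) (k : nat) : int :=
  \sum_(s <- take k w) stepx s.
Definition posy (i : nat) (w : seq 'I_4) (k : nat) : int :=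
  i%:Z + \sum_(s <- take k w) stepy s.

Definition gessel_walk (n i j : nat) (w : n.-tuple 'I_4) : bool :=
  [forall k : 'I_n.+1, (0 <= posx w k) && (0 <= posy i w k)]
  && (posx w n == 0) && (posy i w n == j%:Z).

Definition gessel (n i j : nat) : {set n.-tuple 'I_4} :=
  [set w : n.-tuple 'I_4 | gessel_walk i j w].

(* Both sides are computed by the same transfer operator.  A permutation
   in B_{k+2}(213) is obtained from a unique one in B_{k+1}(213) by
   appending a last value v (the earlier values are standardized); if the
   shorter permutation ends with the value l and has excess d = #ascents -
   #descents, the appended value must satisfy v <= l+1 (else 2-1-3 appears
   with v as the 3), and v = l+1 is an ascent (new state (l+1, d+1)) while
   v <= l is a descent (new state (v, d-1), allowed only when d > 0).  So
   the weighted counts obey the recursion [ballot_step], and the number of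
   elements of B_{n+1}(213) is [ballot_count n 0 0].

   On the walk side, let [axis_walks n x y] count n-step quadrant Gessel
   walks from (x,y) that end on the y-axis.  A binomial transform
   intertwines the two recursions: ballot_count n t d is the sum over x of
   'C(t, x) * axis_walks n x d.  At t = d = 0 this gives the theorem, once
   the sum over endpoints (0,j) of the Gessel walk sets is identified with
   axis_walks n 0 0. *)

From mathcomp Require Import all_boot all_order all_algebra all_fingroup.
From mathcomp Require Import zify.
Set Implicit Arguments. Unset Strict Implicit. Unset Printing Implicit Defensive.
Import Order.TTheory GRing.Theory Num.Theory.

(* Given a weight g(last value, excess) on permutations, ballot_step g t d
   is the total weight of the one-value extensions in B(213) of a
   permutation of B(213) that ends with the value t and has excess d. *)
Definition ballot_step (g : nat -> nat -> nat) (t d : nat) : nat :=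
  (g t.+1 d.+1 + (if d is d'.+1 then \sum_(v < t.+1) g v d' else 0))%N.

(* The number of ways to append n more values to a permutation of B(213)
   ending at t with excess d while staying in B(213).  Starting from the
   one-letter permutation (t = d = 0) it counts B_{n+1}(213). *)
Definition ballot_count (n : nat) : nat -> nat -> nat :=
  iter n ballot_step (fun _ _ => 1%N).

(* Contribution of appending the value v to a permutation with last value
   l and excess d: a descent when v <= l, an ascent when v = l + 1, and a
   213 pattern (contribution 0) when v > l + 1. *)
Definition extension_term (g : nat -> nat -> nat) (l d v : nat) : nat :=
  if (v <= l)%N then (if d is d'.+1 then g v d' else 0)
  else if v == l.+1 then g v d.+1 else 0.

Lemma sum_extension_terms (g : nat -> nat -> nat) k l d : (l <= k)%N ->
  (\sum_(v < k.+2) extension_term g l d v)%N = ballot_step g l d.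
Proof.
move=> hl; rewrite -(big_mkord xpredT (extension_term g l d)).
rewrite (big_cat_nat _ (n := l.+2)) //= /extension_term.
rewrite [X in (_ + X)%N]big1_seq ?addn0; last first.
  move=> v /andP[_]; rewrite mem_index_iota => /andP[hv _].
  by rewrite leqNgt (leq_trans _ hv) //= gtn_eqF.
rewrite big_nat_recr //= ltnn eqxx addnC /ballot_step; congr (_ + _)%N.
case: d => [|d].
  by rewrite big_nat_cond big1 // => v /andP[/andP[_]]; rewrite ltnS => ->.
by rewrite big_mkord; apply: eq_bigr => v _; rewrite -ltnS ltn_ord.
Qed.

(* Quadrant Gessel walks with n steps from (x, y) that end on the y-axis,
   by decomposition on the first step: N, NE, S, SW. *)
Fixpoint axis_walks (n x y : nat) : nat :=
  match n with
  | 0 => (x == 0)%N : nat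
  | n'.+1 => (axis_walks n' x y.+1 + axis_walks n' x.+1 y.+1 +
      (if y is y'.+1 then axis_walks n' x y' +
         (if x is x'.+1 then axis_walks n' x' y' else 0) else 0))%N
  end.

(* Pascal's rule summed against a weight f, in two directions: it
   converts the NE/N steps (resp. S/SW steps) of the walks into the shift
   t -> t + 1 (resp. the restriction to t) of the binomial index. *)
Lemma binomial_sum_succ (f : nat -> nat) t :
  (\sum_(x < t.+2) 'C(t.+1, x) * f x = \sum_(x < t.+1) 'C(t, x) * (f x + f x.+1))%N.
Proof.
rewrite big_ord_recl /= bin0 mul1n.
under eq_bigr => i _ do rewrite /bump /= add1n binS mulnDl.
rewrite big_split /=.
under [in RHS]eq_bigr => i _ do rewrite mulnDr.
rewrite big_split /= addnA; congr (_ + _).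
rewrite [in RHS]big_ord_recl /= bin0 mul1n big_ord_recr /= bin_small // mul0n addn0.
by congr (_ + _); apply: eq_bigr => i _; rewrite /bump /= add1n.
Qed.

Lemma binomial_sum_pred (f : nat -> nat) t :
  (\sum_(x < t.+1) 'C(t, x) * (f x + (if nat_of_ord x is x'.+1 then f x' else 0))
   = \sum_(x < t.+1) 'C(t.+1, x.+1) * f x)%N.
Proof.
under eq_bigr => i _ do rewrite mulnDr.
rewrite big_split /= [X in _ + X = _]big_ord_recl /= muln0 add0n.
under [in RHS]eq_bigr => i _ do rewrite binS mulnDl.
rewrite big_split /= addnC; congr (_ + _).
rewrite [in RHS]big_ord_recr /= bin_small // mul0n addn0.
by apply: eq_bigr => i _; rewrite /bump /= add1n.
Qed.

(* The hockey-stick identity, weighted: it absorbs the sum over the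
   descent values v <= t in [ballot_step]. *)
Lemma binomial_hockey_stick (f : nat -> nat) t :
  (\sum_(v < t.+1) \sum_(x < v.+1) 'C(v, x) * f x
   = \sum_(x < t.+1) 'C(t.+1, x.+1) * f x)%N.
Proof.
elim: t => [|t IH]; first by rewrite !big_ord_recl !big_ord0 /= !addn0.
rewrite big_ord_recr /= IH [in RHS]big_ord_recr /= binn.
under [in RHS]eq_bigr => i _ do rewrite binS mulnDl.
by rewrite big_split /= [in X in _ + X = _]big_ord_recr /= binn addnA.
Qed.

Lemma ballot_count_binomial n t d :
  ballot_count n t d = (\sum_(x < t.+1) 'C(t, x) * axis_walks n x d)%N.
Proof.
elim: n t d => [|n IH] t d.
  rewrite /= big_ord_recl /= bin0 big1 // => i _.
  by rewrite /bump /= add1n muln0.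
rewrite /ballot_count iterS -/(ballot_count n) /ballot_step IH /=.
under [in RHS]eq_bigr => i _ do rewrite mulnDr.
rewrite big_split /= (binomial_sum_succ (fun x => axis_walks n x d.+1)).
congr (_ + _); case: d => [|d]; first by rewrite big1 // => i _; rewrite muln0.
under eq_bigr => v _ do rewrite IH.
rewrite (binomial_hockey_stick (fun x => axis_walks n x d)).
by rewrite (binomial_sum_pred (fun x => axis_walks n x d)).
Qed.

Lemma pvalE m (pi : 'S_m) (a : 'I_m) : pval pi a = pi a.
Proof. by case: m pi a => [|m] pi a; [case: a | rewrite /pval inord_val]. Qed.

Lemma pval_lt m (pi : 'S_m) a : (a < m)%N -> (pval pi a < m)%N.
Proof. by move=> ha; rewrite -[a]/(nat_of_ord (Ordinal ha)) pvalE ltn_ord. Qed.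

Lemma pval_inj m (pi : 'S_m) a b : (a < m)%N -> (b < m)%N ->
  pval pi a = pval pi b -> a = b.
Proof.
move=> ha hb; rewrite -[a]/(nat_of_ord (Ordinal ha)) -[b]/(nat_of_ord (Ordinal hb)).
by rewrite !pvalE => /val_inj /perm_inj [].
Qed.

Lemma pval_surj m (pi : 'S_m) u : (u < m)%N -> exists2 a, (a < m)%N & pval pi a = u.
Proof.
move=> hu; exists (pi^-1%g (Ordinal hu)); first exact: ltn_ord.
by rewrite pvalE permKV.
Qed.

Lemma contains213P m (pi : 'S_m) : contains213 pi <->
  exists a b c, [/\ (a < b)%N, (b < c)%N, (c < m)%N &
                    (pval pi b < pval pi a < pval pi c)%N].
Proof.
split.
  move=> /existsP[a /existsP[b /existsP[c /and4P[ab bc ba ac]]]].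
  by exists a, b, c; rewrite !pvalE ba ac ltn_ord.
move=> [a [b [c [ab bc cm /andP[ba ac]]]]].
have bm : (b < m)%N by apply: ltn_trans cm.
have am : (a < m)%N by apply: ltn_trans bm.
apply/existsP; exists (Ordinal am); apply/existsP; exists (Ordinal bm).
by apply/existsP; exists (Ordinal cm); rewrite /= ab bc -!pvalE ba ac.
Qed.

(* Every permutation of m + 1 letters is uniquely its last value v
   together with the standardization s of its first m values, namely
   [lift_perm ord_max v s]. *)
Lemma sum_perm_last m (F : 'S_m.+1 -> nat) :
  (\sum_(p : 'S_m.+1) F p
   = \sum_(s : 'S_m) \sum_(v : 'I_m.+1) F (lift_perm ord_max v s))%N.
Proof.
rewrite (partition_big (fun p : 'S_m.+1 => p ord_max) predT) //=.
rewrite exchange_big /=; apply: eq_bigr => v _.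
rewrite (reindex (lift_perm ord_max v)); last first.
  pose unlift_at i (p : 'S_m.+1) k := odflt k (unlift (p i) (p (lift i k))).
  have unlift_atK i (p : 'S_m.+1) k : lift (p i) (unlift_at i p k) = p (lift i k).
    rewrite /unlift_at; have:= neq_lift i k.
    by rewrite -(can_eq (permK p)) => /unlift_some[] ? ? ->.
  have unlift_at_inj p : injective (unlift_at ord_max p).
    apply: can_inj (unlift_at (p ord_max) p^-1%g) _ => k.
    by rewrite {1}/unlift_at unlift_atK !permK liftK.
  exists (fun p => perm (unlift_at_inj p)) => [s _ | p].
    apply/permP => k.
    by rewrite permE /unlift_at lift_perm_lift lift_perm_id liftK.
  move/(p _ =P _) => pv; apply/permP => k.
  case: (unliftP ord_max k) => [k'|] ->; rewrite ?lift_perm_id //.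
  by rewrite lift_perm_lift -pv permE unlift_atK.
by apply: eq_bigl => s; rewrite lift_perm_id eqxx.
Qed.

Lemma bump_ltn2 v x y : (bump v x < bump v y) = (x < y).
Proof. by rewrite !ltnNge leq_bump2. Qed.

Lemma bump_ltn_pivot v x : (bump v x < v) = (x < v).
Proof. by rewrite /bump; case: (leqP v x) => /=; lia. Qed.

Lemma pivot_ltn_bump v x : (v < bump v x) = (v <= x).
Proof. by rewrite /bump; case: (leqP v x) => /=; lia. Qed.

Definition is_ballot213 m (pi : 'S_m) : bool := ballot pi && ~~ contains213 pi.
Definition excess m (pi : 'S_m) : nat := (pref_asc pi m - pref_des pi m)%N.

(* Appending the value v to s, whose last value is l; the earlier values
   at least v are shifted up by one. *)
Section AppendLast.
Variables (k : nat) (s : 'S_k.+1) (v : 'I_k.+2).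
Local Notation p := (lift_perm ord_max v s).
Local Notation l := (pval s k).

Lemma pval_append j : (j < k.+1)%N -> pval p j = bump v (pval s j).
Proof.
move=> hj; rewrite /pval.
have -> : (inord j : 'I_k.+2) = lift ord_max (inord j : 'I_k.+1).
  apply: val_inj; rewrite /= /bump !inordK //; last exact: ltnW.
  by rewrite ltnNge -ltnS hj.
by rewrite /= lift_perm_lift.
Qed.

Lemma pval_append_last : pval p k.+1 = v.
Proof.
rewrite /pval.
have -> : (inord k.+1 : 'I_k.+2) = ord_max by apply: val_inj; rewrite /= inordK.
by rewrite /= lift_perm_id.
Qed.

Lemma pref_asc_append i : (i <= k.+1)%N -> pref_asc p i = pref_asc s i.
Proof.
move=> hi; apply: eq_bigr => j _; have hj := ltn_ord j.
by rewrite !pval_append ?bump_ltn2 //; lia.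
Qed.

Lemma pref_des_append i : (i <= k.+1)%N -> pref_des p i = pref_des s i.
Proof.
move=> hi; apply: eq_bigr => j _; have hj := ltn_ord j.
by rewrite !pval_append ?bump_ltn2 //; lia.
Qed.

Lemma pref_asc_append_all : pref_asc p k.+2 = (pref_asc s k.+1 + (l < v))%N.
Proof.
rewrite -(pref_asc_append (leqnn _)) /pref_asc big_ord_recr; congr (_ + _).
by rewrite pval_append_last pval_append // bump_ltn_pivot.
Qed.

Lemma pref_des_append_all : pref_des p k.+2 = (pref_des s k.+1 + (v <= l))%N.
Proof.
rewrite -(pref_des_append (leqnn _)) /pref_des big_ord_recr; congr (_ + _).
by rewrite pval_append_last pval_append // pivot_ltn_bump.
Qed.

Lemma ballot_append :
  ballot p = ballot s && (pref_des p k.+2 <= pref_asc p k.+2)%N.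
Proof.
apply/forallP/andP => [H | [/forallP Hs Hp] i].
  split; last exact: (H ord_max).
  apply/forallP => i; have := H (widen_ord (leqnSn _) i).
  by rewrite /= pref_asc_append ?pref_des_append // -ltnS ltn_ord.
have := ltn_ord i; rewrite ltnS leq_eqVlt => /orP[/eqP -> // | hi].
by have := Hs (Ordinal hi); rewrite /= pref_asc_append ?pref_des_append // -ltnS.
Qed.

Lemma contains213_append : contains213 p <-> contains213 s \/
  exists a b, [/\ (a < b)%N, (b < k.+1)%N & (pval s b < pval s a < v)%N].
Proof.
rewrite !contains213P; split.
  move=> [a [b [c [ab bc ck pat]]]].
  have bk : (b < k.+1)%N by lia.
  have ak : (a < k.+1)%N by lia.
  move: pat; rewrite !(pval_append ak) !(pval_append bk) bump_ltn2.
  case: (ltnP c k.+1) => [ck' | kc].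
    by rewrite pval_append // bump_ltn2 => pat; left; exists a, b, c.
  have -> : c = k.+1 by lia.
  by rewrite pval_append_last bump_ltn_pivot => pat; right; exists a, b.
move=> [[a [b [c [ab bc ck pat]]]] | [a [b [ab bk pat]]]].
  exists a, b, c; split => //; first lia.
  by rewrite !pval_append ?bump_ltn2 //; lia.
exists a, b, k.+1; split => //.
by rewrite pval_append_last !pval_append ?bump_ltn2 ?bump_ltn_pivot //; lia.
Qed.

(* When s avoids 213, some pair of s forms a 21 below v exactly when v
   exceeds l + 1: such a pair must end at the last position (else it
   would complete a 213 with the last value), and l + 1 is then a value
   of s placed before l. *)
Lemma pattern21_below_iff : ~~ contains213 s ->
  (exists a b, [/\ (a < b)%N, (b < k.+1)%N & (pval s b < pval s a < v)%N])
  <-> (l.+1 < v)%N.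
Proof.
move=> /negP avoid; split.
  move=> [a [b [ab bk /andP[ba av]]]]; rewrite ltnNge; apply/negP => vl.
  have al : pval s a != l.
    by apply/eqP => /pval_inj e; have := e (ltn_trans ab bk) (ltnSn k); lia.
  have b_lt_k : (b < k)%N.
    rewrite ltn_neqAle -ltnS bk andbT; apply/eqP => e; move: ba; rewrite e; lia.
  by apply: avoid; apply/contains213P; exists a, b, k; split => //; lia.
move=> lv; have lk : (l.+1 < k.+1)%N by have := ltn_ord v; lia.
have [a ak sa] := pval_surj s lk.
have a_ne_k : a != k by apply/eqP => e; move: sa; rewrite e; lia.
by exists a, k; split; lia.
Qed.

Lemma contains213_append_avoiding : ~~ contains213 s -> contains213 p = (l.+1 < v)%N.
Proof.
move=> avoid; apply/idP/idP => [| lv].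
  move/contains213_append => [c | pat]; first by rewrite c in avoid.
  exact/(pattern21_below_iff avoid).
by apply/contains213_append; right; apply/(pattern21_below_iff avoid).
Qed.

Lemma ballot213_append_prefix : is_ballot213 p -> is_ballot213 s.
Proof.
rewrite /is_ballot213 ballot_append => /andP[/andP[-> _] avoid] /=.
by apply: contraNN avoid => c; apply/contains213_append; left.
Qed.

Lemma ballot213_append_term (g : nat -> nat -> nat) : is_ballot213 s ->
  (is_ballot213 p * g (pval p k.+1) (excess p))%N = extension_term g l (excess s) v.
Proof.
move=> /andP[bs avoid].
have DA : (pref_des s k.+1 <= pref_asc s k.+1)%N by have := forallP bs ord_max.
rewrite /is_ballot213 (contains213_append_avoiding avoid) ballot_append bs.
rewrite /excess pref_asc_append_all pref_des_append_all pval_append_last /extension_term.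
set A := pref_asc s k.+1 in DA *; set D := pref_des s k.+1 in DA *; clearbody A D.
case: (leqP v l) => [vl | lv].
  have l1v : (l.+1 < v)%N = false by apply: leq_gtF; apply: leq_trans vl _.
  rewrite l1v andbT /= addn0 addn1; case E: (A - D)%N => [|d].
    by have -> : (D < A)%N = false by lia.
  have -> : (D < A)%N by lia.
  by rewrite mul1n; congr g; lia.
rewrite addn0 addn1; case: eqP => [-> | ne].
  by rewrite ltnn (leqW DA) /= mul1n; congr g; lia.
have -> : (l.+1 < v)%N by lia.
by rewrite /= andbF.
Qed.
End AppendLast.

Lemma sum_ballot213_append k (g : nat -> nat -> nat) :
  (\sum_(p : 'S_k.+2) is_ballot213 p * g (pval p k.+1) (excess p) =
   \sum_(s : 'S_k.+1) is_ballot213 s * ballot_step g (pval s k) (excess s))%N.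
Proof.
rewrite sum_perm_last; apply: eq_bigr => s _.
have [good_s | bad_s] := boolP (is_ballot213 s).
  rewrite mul1n -(sum_extension_terms g _ (_ : pval s k <= k)%N); last first.
    by rewrite -ltnS pval_lt.
  by apply: eq_bigr => v _; apply: ballot213_append_term.
rewrite mul0n big1 // => v _.
by rewrite (negbTE (contra (@ballot213_append_prefix k s v) bad_s)).
Qed.

Lemma sum_ballot213 k (g : nat -> nat -> nat) :
  (\sum_(s : 'S_k.+1) is_ballot213 s * g (pval s k) (excess s))%N
  = iter k ballot_step g 0 0.
Proof.
elim: k g => [|k IH] g; last by rewrite sum_ballot213_append IH iterSr.
rewrite (eq_bigr (fun _ => g 0 0)) ?sum_nat_const ?card_Sn ?mul1n // => s _.
have pref_trivial (i : 'I_2) : (nat_of_ord i).-1 = 0 by case: i => [[|[|i]] hi].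
have -> : is_ballot213 s.
  apply/andP; split.
    by apply/forallP => i; rewrite /pref_des /pref_asc pref_trivial !big_ord0.
  by apply/negP => /contains213P [a [b [c [ab bc c1 _]]]]; lia.
rewrite mul1n /excess /pref_asc /pref_des /= !big_ord0.
by case: (s (inord 0)) => [[|?] ?].
Qed.

Lemma sum_tuple_cons (T : finType) n (F : n.+1.-tuple T -> nat) :
  (\sum_(t : n.+1.-tuple T) F t
   = \sum_(x : T) \sum_(w : n.-tuple T) F [tuple of x :: w])%N.
Proof.
rewrite pair_big /= (reindex (fun p : T * n.-tuple T => [tuple of p.1 :: p.2])) //=.
exists (fun t : n.+1.-tuple T => (thead t, [tuple of behead t])).
  by move=> [x w] _ /=; congr (_, _); apply: val_inj.
by move=> t _; rewrite [RHS]tuple_eta; apply: val_inj.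
Qed.

Lemma sum_tuple_nil (T : finType) (F : 0.-tuple T -> nat) :
  (\sum_(t : 0.-tuple T) F t = F [tuple])%N.
Proof.
rewrite (eq_bigr (fun _ => F [tuple])) => [|t _]; last by rewrite tuple0.
by rewrite sum_nat_const card_tuple expn0 mul1n.
Qed.

Lemma card_set_pred (T : finType) (P : pred T) : #|[set x | P x]| = (\sum_x P x)%N.
Proof.
rewrite cardsE -sum1_card big_mkcond /=; apply: eq_bigr => x _.
by rewrite unfold_in; case: (P x).
Qed.

Local Open Scope ring_scope.

Fixpoint quadrant_walk (x y : int) (w : seq 'I_4) : bool :=
  match w with
  | [::] => x == 0
  | s :: w' => [&& 0 <= x + stepx s, 0 <= y + stepy s &
                   quadrant_walk (x + stepx s) (y + stepy s) w']
  end.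

Lemma int_succ (m : nat) : m%:Z + 1 = m.+1%:Z.
Proof. by rewrite -PoszD addn1. Qed.

Lemma int_pred (m : nat) : m.+1%:Z - 1 = m%:Z.
Proof. by rewrite -int_succ addrK. Qed.

Lemma count_quadrant_walks n (x y : nat) :
  (\sum_(w : n.-tuple 'I_4) quadrant_walk x%:Z y%:Z w)%N = axis_walks n x y.
Proof.
elim: n x y => [|n IH] x y; first by rewrite sum_tuple_nil.
rewrite sum_tuple_cons /= !big_ord_recl big_ord0 addn0 /stepx /stepy /=.
rewrite !addr0 !int_succ !IH [X in (_ + X)%N = _]addnCA addnA; congr (_ + _)%N.
case: y => [|y]; first by rewrite !big1 //= => w _; rewrite andbF.
rewrite !int_pred; case: x => [|x]; last by rewrite !int_pred !IH.
by rewrite IH [X in (_ + X)%N]big1 ?addn0.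
Qed.

Lemma quadrant_walkP (w : seq 'I_4) (x y : int) : 0 <= x -> 0 <= y ->
  reflect ((forall k, (k <= size w)%N ->
             (0 <= x + \sum_(s <- take k w) stepx s) &&
             (0 <= y + \sum_(s <- take k w) stepy s))
           /\ x + \sum_(s <- w) stepx s = 0)
          (quadrant_walk x y w).
Proof.
elim: w x y => [|s w IH] x y x0 y0 /=.
  rewrite big_nil addr0; apply: (iffP eqP) => [-> | [] //].
  by split => // k _; rewrite !big_nil !addr0 y0 andbT.
apply: (iffP and3P) => [[xs ys /(IH _ _ xs ys) [pref end0]] | [pref end0]].
  split; last by rewrite big_cons addrA.
  by case=> [|k] hk; rewrite ?take0 ?big_nil ?addr0 ?x0 ?y0 //= !big_cons !addrA pref.
have := pref 1%N isT; rewrite /= take0 !big_cons !big_nil !addr0 => /andP[xs ys].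
split => //; apply/(IH _ _ xs ys); split; last by move: end0; rewrite big_cons addrA.
by move=> k hk; have := pref k.+1 hk; rewrite /= !big_cons !addrA.
Qed.

Lemma gessel_walkE n j (w : n.-tuple 'I_4) :
  gessel_walk 0 j w = quadrant_walk 0 0 w && (\sum_(s <- w) stepy s == j%:Z).
Proof.
have take_all : take n w = w by rewrite take_oversize // size_tuple.
rewrite /gessel_walk /posx /posy add0r take_all.
have origin_ok := quadrant_walkP w (lexx 0) (lexx 0).
apply/idP/idP => [/andP[/andP[/forallP pref /eqP end0] ->] |
                  /andP[/origin_ok [pref end0] ->]].
  rewrite andbT; apply/origin_ok; split; last by rewrite add0r.
  move=> k; rewrite size_tuple => hk.
  by have := pref (Ordinal (hk : (k < n.+1)%N)); rewrite /= !add0r.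
rewrite add0r in end0; rewrite end0 eqxx !andbT.
by apply/forallP => k; have := pref k; rewrite size_tuple !add0r; apply; rewrite -ltnS.
Qed.

(* The height reached by a quadrant walk is a natural number at most its
   length, so it ends at exactly one of the points (0, j), j <= n. *)
Lemma quadrant_walk_height_ge0 x y w :
  quadrant_walk x y w -> 0 <= y -> 0 <= y + \sum_(s <- w) stepy s.
Proof.
elim: w x y => [|s w IH] x y /=; first by rewrite big_nil addr0.
by move=> /and3P[_ ys /IH h] _; rewrite big_cons addrA; apply: h.
Qed.

Lemma height_gain_le_length (w : seq 'I_4) : \sum_(s <- w) stepy s <= (size w)%:Z.
Proof.
elim: w => [|s w IH]; first by rewrite big_nil.
rewrite big_cons /= -int_succ addrC; apply: lerD IH _.
by case: s => [[|[|[|[|m]]]] hm].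
Qed.

Lemma sum_gessel_axis_walks n :
  (\sum_(j < n.+1) #|gessel n 0 j|)%N = axis_walks n 0 0.
Proof.
rewrite -count_quadrant_walks.
under eq_bigr => j _ do rewrite /gessel card_set_pred.
rewrite exchange_big /=; apply: eq_bigr => w _.
under eq_bigr => j _ do rewrite gessel_walkE.
have [ok | _] := boolP (quadrant_walk 0 0 w); last by rewrite big1.
have h_ge0 := quadrant_walk_height_ge0 ok (lexx 0); rewrite add0r in h_ge0.
have h_le := height_gain_le_length w; rewrite size_tuple in h_le.
have [m height] : exists m : nat, \sum_(s <- w) stepy s = m%:Z.
  by exists (absz (\sum_(s <- w) stepy s)); rewrite gez0_abs.
rewrite height lez_nat in h_le; rewrite height.
rewrite (bigD1 (Ordinal (h_le : (m < n.+1)%N))) //= eqxx big1 // => j ne_jm.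
rewrite eqz_nat (_ : (m == j) = false) //; apply: contraNF ne_jm => /eqP e.
by apply/eqP/val_inj; rewrite /= e.
Qed.

Theorem theorem1p4 (n : nat) :
  #|ballot213 n.+1| = (\sum_(j < n.+1) #|gessel n 0 j|)%N.
Proof.
rewrite sum_gessel_axis_walks /ballot213 card_set_pred.
have := sum_ballot213 n (fun _ _ => 1%N).
rewrite -/(ballot_count n) ballot_count_binomial big_ord1 bin0 mul1n => <-.
by apply: eq_bigr => s _; rewrite muln1.
Qed.
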